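(* Let $k\ge2$ be an integer. For each $t>0$, $\frac1n a_n(\delta_nt)-\mu_n(\delta_nt)\to0$ in $L^1$ as $n\to\infty$.
   Context: $\xi$ is an offspring law on $\{0,1,\dots\}$ with mean 1 and $0<\sigma^2:=\sum_{p\ge2}p(p-1)\xi(p)<\infty$; $T_n$ is a Galton--Watson tree with law $\xi$ conditioned to have $n$ vertices. Each vertex $v$ carries an independent rate-1 Poisson process $N_v$ and is removed at time $\eta_v=\inf\{t:N_v(t)=k\}$. $T_n(t)$ is the set of vertices $v$ such that neither $v$ nor any ancestor of $v$ has been removed by time $t$; $\mu_n(t)=\#T_n(t)/n$; $a_n(t)=\#\{v\in T_n(t):N_v(t)=0\}$; $\delta_n=\sigma^{1/k}n^{-1/(2k)}$. *)

From HB Require Import structures.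
From mathcomp Require Import all_boot all_order all_algebra.
From mathcomp Require Import all_classical all_reals.
From mathcomp Require Import topology normedtype sequences exp.
Set Implicit Arguments. Unset Strict Implicit. Unset Printing Implicit Defensive.
Import Order.TTheory GRing.Theory Num.Theory.
Local Open Scope ring_scope.

(* ---------- Plane trees with n vertices ----------
   A plane (ordered rooted) tree with n >= 1 vertices is encoded by labelling
   its vertices 0,...,n-1 in depth-first (pre-)order and recording the parent
   function par : 'I_n -> 'I_n (the root 0 is its own "parent").
   Children of a vertex are ordered by their labels. *)

Definition anc (n : nat) (par : {ffun 'I_n -> 'I_n}) (u v : 'I_n) : bool :=
  [exists j : 'I_n.+1, iter j (fun x => par x) v == u].

(* par is the parent function of a plane tree labelled in depth-first order:
   the root is 0, and for v >= 1 the parent of v is < v and is an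
   ancestor-or-self of v-1 (this is exactly the preorder condition). *)
Definition ptree (n : nat) (par : {ffun 'I_n -> 'I_n}) : bool :=
  (0 < n)%N &&
  [forall v : 'I_n,
     if val v == 0%N then par v == v
     else (val (par v) < val v)%N &&
          [exists w : 'I_n, (val w == (val v).-1) && anc par (par v) w]].

Definition outdeg (n : nat) (par : {ffun 'I_n -> 'I_n}) (v : 'I_n) : nat :=
  #|[set w : 'I_n | (par w == v) && (w != v)]|.

Definition gw_weight (R : realType) (xi : nat -> R) (n : nat)
  (par : {ffun 'I_n -> 'I_n}) : R :=
  \prod_(v : 'I_n) xi (outdeg par v).

Definition gw_Z (R : realType) (xi : nat -> R) (n : nat) : R :=
  \sum_(par : {ffun 'I_n -> 'I_n} | ptree par) gw_weight xi par.

(* ---------- Poisson clocks at a fixed time s ----------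
   At time s the process N_v only matters through min(N_v(s), k): vertex v
   has been removed by time s iff eta_v <= s iff N_v(s) >= k.  The law of
   min(N_v(s), k), with N_v(s) ~ Poisson(s), is: *)
Definition poisson_pmf (R : realType) (s : R) (j : nat) : R :=
  expR (- s) * s ^+ j / (j`!)%:R.

Definition capped_law {R : realType} (k : nat) (s : R) (j : 'I_k.+1) : R :=
  if (val j < k)%N then poisson_pmf s j
  else 1 - \sum_(i < k) poisson_pmf s i.

(* m v = min(N_v(s), k).  v is in T_n(s) iff neither v nor an ancestor of v
   has been removed, i.e. N_u(s) < k for all ancestors-or-self u. *)
Definition alive (n k : nat) (par : {ffun 'I_n -> 'I_n})
  (m : {ffun 'I_n -> 'I_k.+1}) (v : 'I_n) : bool :=
  [forall u : 'I_n, anc par u v ==> (val (m u) < k)%N].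

Definition card_alive (n k : nat) (par : {ffun 'I_n -> 'I_n})
  (m : {ffun 'I_n -> 'I_k.+1}) : nat :=
  #|[set v : 'I_n | alive par m v]|.

Definition card_zero (n k : nat) (par : {ffun 'I_n -> 'I_n})
  (m : {ffun 'I_n -> 'I_k.+1}) : nat :=
  #|[set v : 'I_n | alive par m v && (val (m v) == 0%N)]|.

(* E | a_n(s)/n - mu_n(s) |, where the tree is T_n (GW(xi) conditioned on n
   vertices) and the clocks are independent of each other and of the tree. *)
Definition L1_gap (R : realType) (xi : nat -> R) (k n : nat) (s : R) : R :=
  (\sum_(par : {ffun 'I_n -> 'I_n} | ptree par)
     gw_weight xi par *
     \sum_(m : {ffun 'I_n -> 'I_k.+1})
        (\prod_(v : 'I_n) @capped_law R k s (m v)) *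
        `| (card_zero par m)%:R / n%:R - (card_alive par m)%:R / n%:R |)
  / gw_Z xi n.

Definition delta_n (R : realType) (sigma2 : R) (k n : nat) : R :=
  powR (Num.sqrt sigma2) (k%:R^-1) * powR n%:R (- ((2 * k)%:R^-1)).

(* A vertex of T_n(s) that is not counted by a_n(s) is a vertex whose clock
   has rung by time s.  Hence, for every tree and every clock configuration,
   |a_n(s)/n - mu_n(s)| <= #{v : N_v(s) >= 1} / n, whose expectation is
   1 - e^{-s} <= s whatever the tree.  With s = delta_n t -> 0 this gives the
   L^1 convergence; no moment assumption on xi is needed. *)
From mathcomp Require Import all_boot all_order all_algebra.
From mathcomp Require Import all_classical all_reals.
From mathcomp Require Import topology normedtype sequences exp.
Import Order.TTheory GRing.Theory Num.Theory numFieldNormedType.Exports.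

Local Open Scope ring_scope.

Lemma sum_exp_coeff_le_expR (R : realType) (s : R) (k : nat) : 0 <= s ->
  \sum_(i < k) s ^+ i / (i`!)%:R <= expR s.
Proof.
move=> s_ge0.
have -> : \sum_(i < k) s ^+ i / (i`!)%:R = series (exp_coeff s) k.
  by rewrite /series /= big_mkord.
apply: nondecreasing_cvgn_le; last exact: is_cvg_series_exp_coeff.
by apply: nondecreasing_series => i _; rewrite divr_ge0 ?exprn_ge0.
Qed.

Section capped_law.
Variables (R : realType) (k : nat) (s : R).

Lemma capped_law_ge0 (j : 'I_k.+1) : 0 <= s -> 0 <= capped_law s j.
Proof.
move=> s_ge0; rewrite /capped_law /poisson_pmf; case: ifP => _.
  by rewrite mulr_ge0 ?invr_ge0 ?mulr_ge0 ?expR_ge0 ?exprn_ge0.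
rewrite subr_ge0 (eq_bigr _ (fun i _ => esym (mulrA _ _ _))) -mulr_sumr.
rewrite [leRHS](_ : _ = expR (- s) * expR s); last by rewrite -expRD addNr expR0.
by rewrite ler_wpM2l ?expR_ge0 ?sum_exp_coeff_le_expR.
Qed.

Lemma sum_capped_law : \sum_(j < k.+1) capped_law s j = 1.
Proof.
rewrite big_ord_recr /= /capped_law /= ltnn.
rewrite (eq_bigr (fun i : 'I_k => poisson_pmf s i)) ?subrKC // => i _.
by rewrite /= ltn_ord.
Qed.

Lemma capped_law0 : (0 < k)%N -> capped_law s (ord0 : 'I_k.+1) = expR (- s).
Proof. by move=> k_gt0; rewrite /capped_law k_gt0 /poisson_pmf divr1 mulr1. Qed.

End capped_law.

Lemma sum_ffun_prod_marginal (R : comPzRingType) (I J : finType)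
    (p f : J -> R) (v : I) :
  \sum_j p j = 1 ->
  \sum_(m : {ffun I -> J}) (\prod_u p (m u)) * f (m v) = \sum_j p j * f j.
Proof.
move=> sum_p1; pose F u j := if u == v then p j * f j else p j.
transitivity (\prod_u \sum_j F u j); last first.
  rewrite (bigD1 v) //= [X in _ * X]big1 ?mulr1 /F ?eqxx // => u /negbTE uv.
  by under eq_bigr do rewrite uv.
rewrite bigA_distr_bigA; apply: eq_bigr => m _.
rewrite (bigD1 v) //= [RHS](bigD1 v) //= /F eqxx mulrAC; congr (_ * _).
by apply: eq_bigr => u /negbTE ->.
Qed.

Section clock_configuration.
Variables (n k : nat) (par : {ffun 'I_n -> 'I_n}) (m : {ffun 'I_n -> 'I_k.+1}).

Lemma card_zero_le_alive : (card_zero par m <= card_alive par m)%N.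
Proof. by apply/subset_leq_card/fintype.subsetP => v; rewrite !inE => /andP[]. Qed.

Lemma card_alive_le_zero_rung :
  (card_alive par m <= card_zero par m + #|[set v | m v != ord0]|)%N.
Proof.
apply: leq_trans (leq_card_setU _ _); apply/subset_leq_card/fintype.subsetP.
by move=> v; rewrite !inE => ->; case: (m v) => -[].
Qed.

Lemma dist_card_zero_alive (R : realType) :
  `| (card_zero par m)%:R / n%:R - (card_alive par m)%:R / n%:R |
    <= #|[set v | m v != ord0]|%:R / (n%:R : R).
Proof.
rewrite -mulrBl normrM [`|_^-1|]ger0_norm ?invr_ge0 // ler_wpM2r ?invr_ge0 //.
rewrite distrC ger0_norm ?subr_ge0 ?ler_nat ?card_zero_le_alive //.
by rewrite lerBlDl -natrD ler_nat card_alive_le_zero_rung.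
Qed.

End clock_configuration.

Lemma expect_card_rung (R : realType) (n k : nat) (s : R) : (0 < k)%N ->
  \sum_(m : {ffun 'I_n -> 'I_k.+1})
      (\prod_v capped_law s (m v)) * #|[set v | m v != ord0]|%:R
    = n%:R * (1 - expR (- s)).
Proof.
move=> k_gt0; pose rung (j : 'I_k.+1) : R := if j != ord0 then 1 else 0.
have card_rung (m : {ffun 'I_n -> 'I_k.+1}) :
    #|[set v | m v != ord0]|%:R = \sum_v rung (m v).
  by rewrite -sumr_const big_mkcond; apply: eq_bigr => v _; rewrite inE.
have expect_rung : \sum_j capped_law s j * rung j = 1 - expR (- s).
  rewrite -(sum_capped_law R k s) [in RHS](bigD1 ord0) //= capped_law0 //.
  rewrite [RHS]addrC addKr [RHS]big_mkcond; apply: eq_bigr => j _.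
  by rewrite /rung; case: ifP; rewrite ?mulr1 ?mulr0.
under eq_bigr do rewrite card_rung mulr_sumr.
rewrite exchange_big /= mulr_natl -[n in _ *+ n]card_ord -sumr_const.
apply: eq_bigr => v _.
by rewrite sum_ffun_prod_marginal ?expect_rung ?sum_capped_law.
Qed.

Lemma L1_gap_le (R : realType) (xi : nat -> R) (k n : nat) (s : R) :
  (forall p, 0 <= xi p) -> (0 < n)%N -> (0 < k)%N -> 0 <= s ->
  0 < gw_Z xi n -> L1_gap xi k n s <= 1 - expR (- s).
Proof.
move=> xi_ge0 n_gt0 k_gt0 s_ge0 Z_gt0.
rewrite /L1_gap ler_pdivrMr // /gw_Z mulr_sumr; apply: ler_sum => par _.
rewrite [leRHS]mulrC ler_wpM2l ?prodr_ge0 //.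
pose P (m : {ffun 'I_n -> 'I_k.+1}) := \prod_v capped_law s (m v).
have P_ge0 m : 0 <= P m by apply: prodr_ge0 => v _; apply: capped_law_ge0.
apply: (@le_trans _ _ (\sum_m P m * (#|[set v | m v != ord0]|%:R / n%:R))).
  by apply: ler_sum => m _; rewrite ler_wpM2l ?P_ge0 ?dist_card_zero_alive.
rewrite (eq_bigr _ (fun m _ => mulrA _ _ _)) -mulr_suml expect_card_rung //.
by rewrite mulrAC mulfV ?mul1r // pnatr_eq0 -lt0n.
Qed.

Local Open Scope classical_set_scope.
Local Open Scope ring_scope.

Lemma cvgn_powR_natN (R : realType) (a : R) : 0 < a ->
  n%:R `^ (- a) @[n --> \oo] --> 0.
Proof.
move=> a_gt0; under eq_fun do rewrite powRN.
apply/(@gtr0_cvgV0 _ _ _ _ (fun n : nat => n%:R `^ a)).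
  by near=> n; rewrite powR_gt0 // ltr0n; near: n; exact: nbhs_infty_gt.
apply/cvgryPge => A; near=> n.
have normAE : `|A| = (`|A| `^ a^-1) `^ a.
  by rewrite -powRrM mulVf ?gt_eqF ?powRr1.
rewrite (le_trans (ler_norm A)) // normAE.
rewrite ge0_ler_powR ?ltW ?nnegrE ?powR_ge0 //.
near: n; exact: nbhs_infty_gtr.
Unshelve. all: by end_near. Qed.

Lemma delta_n_ge0 (R : realType) (sigma2 : R) (k n : nat) :
  0 <= delta_n sigma2 k n.
Proof. by rewrite mulr_ge0 ?powR_ge0. Qed.

Lemma cvgn_delta_n (R : realType) (sigma2 : R) (k : nat) : (0 < k)%N ->
  delta_n sigma2 k n @[n --> \oo] --> 0.
Proof.
move=> k_gt0; rewrite -(mulr0 (Num.sqrt sigma2 `^ k%:R^-1)).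
by apply: cvgMl_tmp; apply: cvgn_powR_natN; rewrite invr_gt0 ltr0n muln_gt0.
Qed.

Theorem lemma7 (R : realType) (xi : nat -> R) (sigma2 : R) (k : nat) (t : R) :
  (2 <= k)%N ->
  (forall p, 0 <= xi p) ->
  (fun N : nat => \sum_(p < N) xi p) @ \oo --> (1 : R^o) ->
  (fun N : nat => \sum_(p < N) p%:R * xi p) @ \oo --> (1 : R^o) ->
  (fun N : nat => \sum_(p < N) (p * p.-1)%:R * xi p) @ \oo --> sigma2 ->
  0 < sigma2 ->
  0 < t ->
  forall eps : R, 0 < eps ->
  exists N : nat, forall n : nat, (N <= n)%N -> 0 < gw_Z xi n ->
    L1_gap xi k n (delta_n sigma2 k n * t) < eps.
Proof.
move=> k_ge2 xi_ge0 _ _ _ _ t_gt0 eps eps_gt0.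
have k_gt0 : (0 < k)%N by apply: leq_trans k_ge2.
have [N _ delta_small] :=
  cvgr_dist_lt _ _ (@cvgn_delta_n R sigma2 k k_gt0) _ (divr_gt0 eps_gt0 t_gt0).
exists N.+1 => n n_gt_N Z_gt0; set s := delta_n sigma2 k n * t.
have s_ge0 : 0 <= s by rewrite mulr_ge0 ?delta_n_ge0 ?ltW.
have s_lt_eps : s < eps.
  have /= := delta_small n (ltnW n_gt_N).
  by rewrite sub0r normrN ger0_norm ?delta_n_ge0 // ltr_pdivlMr.
have n_gt0 : (0 < n)%N by apply: leq_ltn_trans n_gt_N.
apply: le_lt_trans (@L1_gap_le R xi k n s xi_ge0 n_gt0 k_gt0 s_ge0 Z_gt0) _.
by apply: le_lt_trans s_lt_eps; rewrite lerBlDr -lerBlDl expR_ge1Dx.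
Qed.
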